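(* Let $G=(V,E)$ be a unit disk graph, let $VC^*(G)$ be a minimum vertex cover of $G$, and let $VC(G)$ be the vertex cover output by Heuristic VCover on $G$. Then $|VC(G)| \leq 1.5\,|VC^*(G)|$.
   Context: A graph $G$ is a unit disk graph if its vertices can be put in one-to-one correspondence with closed disks of radius $1$ in the plane so that two vertices are adjacent if and only if the corresponding disks intersect (tangent disks are considered to intersect). A vertex cover of $G$ is a set $V'\subseteq V$ containing at least one endpoint of every edge; for $U\subseteq V$, $G(U)$ denotes the subgraph induced on $U$. Heuristic VCover: (1) Set $V_1=\emptyset$, $V'=V$. (2) While $G(V')$ contains a triangle, pick a set $X\subseteq V'$ such that $G(X)$ is a triangle, and set $V_1 = V_1\cup X$, $V'=V'\setminus X$. (3) For the resulting triangle-free graph $G(V')$, compute (by the Nemhauser–Trotter algorithm, in polynomial time) two disjoint sets $P,Q\subseteq V'$ such that: (i) some minimum vertex cover of $G(V')$ contains $P$; (ii) if $D$ is any vertex cover of $G(Q)$ then $D\cup P$ is a vertex cover of $G(V')$; (iii) every minimum vertex cover of $G(V')$ has size at least $|P|+|Q|/2$. (4) Properly color $G(Q)$ with at most $4$ colors (possible since $G(Q)$ is a triangle-free unit disk graph), and let $S$ be a color class of largest cardinality. (5) Output $VC(G)=V_1\cup P\cup (Q\setminus S)$. *)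

From HB Require Import structures.
From mathcomp Require Import all_boot all_order all_algebra.
From mathcomp Require Import reals.
Set Implicit Arguments. Unset Strict Implicit. Unset Printing Implicit Defensive.
Import Order.TTheory GRing.Theory Num.Theory.

(* A simple graph on a finite vertex type T is an irreflexive relation e;
   for unit disk graphs symmetry follows from the geometric representation. *)

Section Defs.
Variable T : finType.
Variable e : rel T.

(* G is a unit disk graph: an injective placement of centres of radius-1
   closed disks in R^2, with u ~ v iff the disks intersect, i.e. iff the
   centres are at distance <= 2 (squared distance <= 4). *)
Definition is_unit_disk_graph (R : realType) : Prop :=
  (forall v, ~~ e v v) /\
  exists p : T -> R * R, injective p /\
    forall u v, u != v ->
      e u v = (((p u).1 - (p v).1) ^+ 2 + ((p u).2 - (p v).2) ^+ 2 <= 4%:R)%R.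

Definition is_vc (U D : {set T}) : Prop :=
  D \subset U /\
  forall x y, x \in U -> y \in U -> e x y -> (x \in D) || (y \in D).

Definition is_min_vc (U D : {set T}) : Prop :=
  is_vc U D /\ forall D', is_vc U D' -> #|D| <= #|D'|.

Definition is_triangle (X : {set T}) : Prop :=
  #|X| = 3 /\ forall x y, x \in X -> y \in X -> x != y -> e x y.

Definition triangle_free (U : {set T}) : Prop :=
  forall X : {set T}, X \subset U -> ~ is_triangle X.

Fixpoint triangle_steps (V' : {set T}) (Xs : seq {set T}) : Prop :=
  match Xs with
  | [::] => True
  | X :: Xs' => X \subset V' /\ is_triangle X /\ triangle_steps (V' :\: X) Xs'
  end.

(* VC is a possible output of Heuristic VCover on G (over all admissible
   choices made by the heuristic). *)
Definition vcover_output (VC : {set T}) : Prop :=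
  exists (Xs : seq {set T}) (P Q : {set T}) (c : T -> 'I_4) (k : 'I_4),
    let V1 := \bigcup_(X <- Xs) X in
    let V' := [set: T] :\: V1 in
    let S := [set x in Q | c x == k] in
    triangle_steps [set: T] Xs /\
        triangle_free V' /\
        P \subset V' /\ Q \subset V' /\ [disjoint P & Q] /\
        (exists D, is_min_vc V' D /\ P \subset D) /\
        (forall D, is_vc Q D -> is_vc V' (D :|: P)) /\
        (forall D, is_min_vc V' D -> 2 * #|P| + #|Q| <= 2 * #|D|) /\
        (forall x y, x \in Q -> y \in Q -> e x y -> c x != c y) /\
        (forall j : 'I_4, #|[set x in Q | c x == j]| <= #|S|) /\
        VC = V1 :|: P :|: (Q :\: S).

End Defs.

From mathcomp Require Import all_boot all_order all_algebra.
From mathcomp Require Import reals.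
From mathcomp Require Import zify.

Set Implicit Arguments.
Unset Strict Implicit.
Unset Printing Implicit Defensive.

(* Let C be a minimum vertex cover of G and t the number of triangles removed
   in step (2). The triangles are disjoint and C contains two vertices of each,
   so |V1| = 3t <= 3/2 |C ∩ V1|. The rest of C covers G(V'), hence has at least
   |D| >= |P| + |Q|/2 vertices, D a minimum cover of G(V'). A largest of the
   four colour classes has at least |Q|/4 vertices, so |P| + |Q \ S| <=
   |P| + 3/4 |Q| <= 3/2 |D|. The unit disk hypothesis is only needed for the
   existence of the 4-colouring, which the output of the heuristic provides. *)

Section VertexCover.
Variables (T : finType) (e : rel T).

Lemma cardsU_disjoint (A B : {set T}) :
  [disjoint A & B] -> #|A :|: B| = #|A| + #|B|.
Proof. by rewrite -(leq_card_setU A B).2 => /eqP. Qed.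

Lemma is_vc_setI (U V C : {set T}) :
  is_vc e U C -> V \subset U -> is_vc e V (C :&: V).
Proof.
move=> [_ coverC] sVU; split; first exact: subsetIr.
move=> x y xV yV exy; rewrite !inE xV yV !andbT.
by apply: coverC; [apply: (subsetP sVU) | apply: (subsetP sVU) | ].
Qed.

Lemma card_clique_le_cover (X C : {set T}) :
  (forall x y, x \in X -> y \in X -> x != y -> e x y) ->
  (forall x y, x \in X -> y \in X -> e x y -> (x \in C) || (y \in C)) ->
  #|X| <= #|C :&: X| + 1.
Proof.
move=> cliqueX coverC; rewrite -(cardsID C X) setIC leq_add2l leqNgt.
apply/card_gt1P => -[x [y []]]; rewrite !inE => /andP[xC xX] /andP[yC yX] xy.
by move: (coverC x y xX yX (cliqueX x y xX yX xy)); rewrite (negbTE xC) (negbTE yC).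
Qed.

Lemma triangle_steps_sub (U : {set T}) (Xs : seq {set T}) :
  triangle_steps e U Xs -> \bigcup_(X <- Xs) X \subset U.
Proof.
elim: Xs U => [|X Xs IH] U /=; first by rewrite big_nil sub0set.
move=> [sXU [_ steps]]; rewrite big_cons subUset sXU /=.
exact: subset_trans (IH _ steps) (subsetDl _ _).
Qed.

Lemma triangle_steps_disjoint (U X : {set T}) (Xs : seq {set T}) :
  triangle_steps e U (X :: Xs) -> [disjoint X & \bigcup_(Y <- Xs) Y].
Proof.
move=> [_ [_ /triangle_steps_sub sub]].
by rewrite disjoint_sym disjoints_subset (subset_trans sub (subsetDr _ _)).
Qed.

Lemma card_triangle_steps (U : {set T}) (Xs : seq {set T}) :
  triangle_steps e U Xs -> #|\bigcup_(X <- Xs) X| = 3 * size Xs.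
Proof.
elim: Xs U => [|X Xs IH] U; first by rewrite big_nil cards0.
move=> steps; have disX := triangle_steps_disjoint steps.
move: steps => [_ [[cardX _] steps]].
by rewrite big_cons (cardsU_disjoint disX) cardX (IH _ steps) mulnS.
Qed.

Lemma triangle_steps_cover (U C : {set T}) (Xs : seq {set T}) :
  triangle_steps e U Xs ->
  (forall x y, x \in U -> y \in U -> e x y -> (x \in C) || (y \in C)) ->
  2 * size Xs <= #|C :&: \bigcup_(X <- Xs) X|.
Proof.
elim: Xs U => [|X Xs IH] U; first by rewrite big_nil.
move=> steps coverC; have disX := triangle_steps_disjoint steps.
move: steps => [sXU [[cardX cliqueX] steps]].
have twoCX : 2 <= #|C :&: X|.
  have := card_clique_le_cover cliqueX (fun x y xX yX =>
    coverC x y (subsetP sXU x xX) (subsetP sXU y yX)).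
  by rewrite cardX addn1 ltnS.
have coverC' x y : x \in U :\: X -> y \in U :\: X -> e x y ->
    (x \in C) || (y \in C).
  by move=> /setDP[xU _] /setDP[yU _]; apply: coverC.
have disC : [disjoint C :&: X & C :&: \bigcup_(Y <- Xs) Y].
  by apply: disjointWl (subsetIr C X) _; apply: disjointWr (subsetIr _ _) disX.
rewrite big_cons setIUr (cardsU_disjoint disC) /= mulnS.
by have := IH _ steps coverC'; lia.
Qed.

Lemma card_le_mul_largest_class (n : nat) (Q : {set T}) (c : T -> 'I_n) (k : 'I_n) :
  (forall j, #|[set x in Q | c x == j]| <= #|[set x in Q | c x == k]|) ->
  #|Q| <= n * #|[set x in Q | c x == k]|.
Proof.
move=> largest; rewrite -sum1_card (partition_big c predT) //=.
rewrite -[n in n * _]card_ord -sum_nat_const; apply: leq_sum => j _.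
by rewrite sum1dep_card.
Qed.

End VertexCover.

Theorem theorem4p3 (R : realType) (T : finType) (e : rel T)
  (VC VCstar : {set T}) :
  is_unit_disk_graph e R ->
  vcover_output e VC ->
  is_min_vc e [set: T] VCstar ->
  2 * #|VC| <= 3 * #|VCstar|.
Proof.
move=> _ [Xs [P [Q [c [k /=]]]]].
set V1 := \bigcup_(X <- Xs) X; set S := [set x in Q | c x == k].
move=> [steps [_ [_ [_ [_ [[D [minD _]] [_ [halfPQ [_ [largestS ->]]]]]]]]]].
move=> [vcC _]; have [_ coverC] := vcC.
have cardV1 : #|V1| = 3 * size Xs := card_triangle_steps steps.
have coverV1 : 2 * size Xs <= #|VCstar :&: V1| := triangle_steps_cover steps coverC.
have coverV' : #|D| <= #|VCstar :&: ([set: T] :\: V1)| :=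
  minD.2 _ (is_vc_setI vcC (subsetT ([set: T] :\: V1))).
have splitC := cardsID V1 VCstar; rewrite setDE -setTD in splitC.
have sSQ : S \subset Q by apply/subsetP => x; rewrite inE => /andP[].
have cardQS := cardsDS sSQ; have cardSQ := subset_leq_card sSQ.
have cardS : #|Q| <= 4 * #|S| := card_le_mul_largest_class largestS.
have cardVC := leq_trans (leq_card_setU (V1 :|: P) (Q :\: S))
  (leq_add (leq_card_setU V1 P) (leqnn #|Q :\: S|)).
have := halfPQ D minD; lia.
Qed.
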